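(* The Segre variety $S_2(3)$ has exactly $136$ Veldkamp lines. Exactly $130$ of them are projective, and together with the $40$ geometric hyperplanes of $S_2(3)$ they form a projective space isomorphic to $\mathrm{PG}(3,3)$ (i.e. every set of four hyperplane sections of $S_2(3)$ by the four planes of $\mathrm{PG}(3,3)$ through a common line is a Veldkamp line). The remaining $6$ Veldkamp lines are non-projective, and each of them consists of four pairwise disjoint ovoids.
   Context: Let $L=\mathrm{PG}(1,3)$, a set of $4$ points. $S_2(3)$ is the point-line incidence structure with point set $L\times L$ (a $4\times4$ grid) whose lines are the rows $\{p\}\times L$ and columns $L\times\{p\}$. A geometric hyperplane is a proper subset $H$ of points such that every line is contained in $H$ or meets $H$ in exactly one point; an ovoid is a geometric hyperplane containing no line. A Veldkamp line of $S_2(3)$ is a set $\{h_1,h_2,h_3,h_4\}$ of four distinct geometric hyperplanes such that all six pairwise intersections $h_i\cap h_j$ ($i\neq j$) are equal. Via the Segre embedding $([x],[y])\mapsto[x\otimes y]$ of $S_2(3)$ into $\mathrm{PG}(3,3)=\mathbb{P}(\mathrm{GF}(3)^2\otimes\mathrm{GF}(3)^2)$, every geometric hyperplane of $S_2(3)$ is the intersection of $S_2(3)$ with a unique plane of $\mathrm{PG}(3,3)$. A Veldkamp line is called projective if its four members are the sections of $S_2(3)$ by the four planes of $\mathrm{PG}(3,3)$ containing a common line, and non-projective otherwise. *)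

From mathcomp Require Import all_boot all_algebra.
Set Implicit Arguments. Unset Strict Implicit. Unset Printing Implicit Defensive.
Import GRing.Theory.
Local Open Scope ring_scope.

Notation F3 := 'F_3.

(* Normalized homogeneous coordinates: a nonzero row vector whose first
   nonzero entry is 1.  Each point of PG(n-1,3) has exactly one such
   representative. *)
Definition normalized n (v : 'rV[F3]_n) : bool :=
  [exists i : 'I_n, (v 0 i == 1) && [forall j : 'I_n, (j < i)%N ==> (v 0 j == 0)]].

Definition PG13 := {v : 'rV[F3]_2 | normalized v}.

(* Point set of S_2(3): L x L. *)
Definition SP := (PG13 * PG13)%type.

Definition grid_row (p : PG13) : {set SP} := [set u : SP | u.1 == p].
Definition grid_col (p : PG13) : {set SP} := [set u : SP | u.2 == p].
Definition grid_lines : {set {set SP}} :=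
  [set grid_row p | p : PG13] :|: [set grid_col p | p : PG13].

Definition geom_hyperplane (H : {set SP}) : bool :=
  (H != [set: SP]) &&
  [forall l in grid_lines, (l \subset H) || (#|l :&: H| == 1%N)].

Definition ovoid (H : {set SP}) : bool :=
  geom_hyperplane H && [forall l in grid_lines, ~~ (l \subset H)].

Definition veldkamp_line (V : {set {set SP}}) : bool :=
  (#|V| == 4%N) && [forall h in V, geom_hyperplane h] &&
  [forall h1 in V, forall h2 in V, forall h3 in V, forall h4 in V,
     (h1 != h2) ==> (h3 != h4) ==> (h1 :&: h2 == h3 :&: h4)].

(* Segre embedding ([x],[y]) |-> [x (x) y] into PG(3,3) = P(GF(3)^2 (x) GF(3)^2);
   x (x) y is represented by the vectorization of the outer product x^T y. *)
Definition segre (u : SP) : 'rV[F3]_(2 * 2) := mxvec ((val u.1)^T *m val u.2).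

Definition section (a : 'rV[F3]_(2 * 2)) : {set SP} :=
  [set u : SP | segre u *m a^T == 0].

(* A line of PG(3,3) is the row space of a rank-2 matrix M : 'M_(2,4).
   The planes containing it are the [a] (a <> 0) with M a^T = 0.
   The set of sections of S_2(3) by these (four) planes: *)
Definition pencil_sections (M : 'M[F3]_(2, 2 * 2)) : {set {set SP}} :=
  section @: [set a : 'rV[F3]_(2 * 2) | (a != 0) && (M *m a^T == 0)].

Definition projective (V : {set {set SP}}) : bool :=
  [exists M : 'M[F3]_(2, 2 * 2), (\rank M == 2%N) && (V == pencil_sections M)].

From mathcomp Require Import all_boot all_algebra.
From mathcomp Require Import zify.
Set Implicit Arguments. Unset Strict Implicit. Unset Printing Implicit Defensive.
Import GRing.Theory.

(* Everything here is finite, so the theorem is proved by computation once the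
   geometry is given explicit coordinates.  Numbering the four points of
   PG(1,3) by their normalized coordinates, a point of the grid becomes an index
   in [0, 16) and a point set a list of 16 bits, on which being a geometric
   hyperplane, an ovoid or disjoint is checked line by line.  Exactly 40 bit
   lists are hyperplanes; a Veldkamp line consists of hyperplanes, so it is
   determined by a 4-element sublist of [0, 40), and 136 of these have all
   pairwise meets equal.  Planes of PG(3,3) and 2 x 4 matrices are coded by
   their coordinates mod 3: running over all 3^8 matrices shows that the
   pencils of sections by the rank 2 ones are exactly 130 of these Veldkamp
   lines, and the remaining 6 are checked to consist of pairwise disjoint
   ovoids. *)

(** * Enumerations and counting *)

Fixpoint words (T : Type) (A : seq T) (n : nat) : seq (seq T) :=
  if n is n'.+1 then [seq a :: w | a <- A, w <- words A n'] else [:: [::]].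

Lemma mem_words (T : eqType) (A : seq T) (n : nat) (w : seq T) :
  (w \in words A n) = (size w == n) && all (mem A) w.
Proof.
elim: n w => [|n IHn] [|a w] //=.
- by apply/negbTE/allpairsP => -[[b v] [_ _]].
apply/allpairsP/and3P => [[[b v] /= [bA vw [-> ->]]] | [wn aA wA]].
  by move: vw; rewrite IHn => /andP[vn vA].
by exists (a, w); rewrite IHn -eqSS wn.
Qed.

Fixpoint ksubseqs (T : Type) (k : nat) (s : seq T) {struct s} : seq (seq T) :=
  match k, s with
  | 0, _ => [:: [::]]
  | _.+1, [::] => [::]
  | k'.+1, x :: s' => map (cons x) (ksubseqs k' s') ++ ksubseqs k s'
  end.

Lemma mem_ksubseqs (T : eqType) (k : nat) (s x : seq T) :
  (x \in ksubseqs k s) = subseq x s && (size x == k).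
Proof.
elim: s k x => [|y s IHs] [|k] [|a w] //=; rewrite ?inE ?andbF //.
- by rewrite mem_cat IHs andbF orbF; apply/negbTE/mapP => -[].
rewrite mem_cat IHs eqSS; have [-> | ay] := eqVneq a y.
  by rewrite mem_map ?IHs -?andb_orl ?orb_idr // => [/cons_subseq | ? ? []].
by rewrite orb_idl // => /mapP[v _ [/eqP]]; rewrite (negPf ay).
Qed.

Lemma card_eq_size (T : finType) (U : eqType) (A : {pred T}) (f : T -> U) (s : seq U) :
  {in A &, injective f} -> uniq s ->
  (forall x, x \in A -> f x \in s) -> (forall y, y \in s -> exists2 x, x \in A & y = f x) ->
  #|A| = size s.
Proof.
move=> f_inj s_uniq fA_s s_fA; rewrite -(size_image f); apply/perm_size/uniq_perm => //.
  by rewrite map_inj_in_uniq ?enum_uniq // => x y; rewrite !mem_enum; apply: f_inj.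
move=> y; apply/imageP/idP => [[x xA ->] | /s_fA]; first exact: fA_s.
by case=> x xA ->; exists x.
Qed.

Lemma distinct_pairs_constant (T U : eqType) (f : T -> T -> U) (a b : T) (y : seq T) :
  let x := [:: a, b & y] in
  a != b -> (forall c d, f c d = f d c) ->
  all (fun c => all (fun d => all (fun e => all (fun g =>
    (c != d) ==> (e != g) ==> (f c d == f e g)) x) x) x) x =
  pairwise (fun c d => (c == d) || (f c d == f a b)) x.
Proof.
move=> x ab fC; have ax : a \in x by rewrite inE eqxx.
have bx : b \in x by rewrite !inE eqxx orbT.
rewrite pairwise_all2rel => [|c|c d]; last by rewrite eq_sym fC.
- apply/allP/allrelP => [all4 c d cx dx | pair2 c cx].
  + case: eqVneq => //= cd.
    by have /allP/(_ d dx)/allP/(_ a ax)/allP/(_ b bx) := all4 c cx; rewrite cd ab.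
  + apply/allP => d dx; apply/allP => e ex; apply/allP => g gx.
    apply/implyP => cd; apply/implyP => eg.
    have := pair2 c d cx dx; have := pair2 e g ex gx.
    by rewrite (negPf cd) (negPf eg) => /eqP-> /eqP->.
- by rewrite eqxx.
Qed.

(** * Coordinates on the grid *)

Definition pg_table : seq (seq nat) := [:: [:: 1; 0]; [:: 0; 1]; [:: 1; 1]; [:: 1; 2]].

(* The default makes pg_point total: indices beyond 3 give the first point. *)
Definition pg_vec (k : nat) : seq nat := nth [:: 1; 0] pg_table k.

Section ProjectiveLine.
Local Open Scope ring_scope.

Lemma ord2P (j : 'I_2) : j = 0 \/ j = 1.
Proof. by case: j => [[|[|//]] ?]; [left | right]; apply/val_inj. Qed.

Lemma normalized2 (v : 'rV[F3]_2) :
  normalized v = (v 0 0 == 1) || (v 0 0 == 0) && (v 0 1 == 1).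
Proof.
apply/existsP/idP => [[j /andP[vj1 /forallP v0]] | /orP[v01 | /andP[v00 v11]]].
- case: (ord2P j) vj1 v0 => -> vj1 v0; first by rewrite vj1.
  by have /implyP/(_ isT)/eqP -> := v0 0; rewrite vj1 eqxx orbT.
- by exists 0; rewrite v01; apply/forallP => j.
- by exists 1; rewrite v11; apply/forallP => j; case: (ord2P j) => ->.
Qed.

Definition pg_coords (p : PG13) : seq nat := [:: nat_of_ord (val p 0 0); nat_of_ord (val p 0 1)].

Lemma normalized_pg_vec (k : nat) : normalized (\row_(j < 2) ((nth 0 (pg_vec k) j)%:R : F3)).
Proof.
rewrite normalized2 !mxE.
case: k => [|[|[|[|k]]]]; try by vm_compute.
by rewrite /pg_vec [nth _ pg_table _]nth_default //; vm_compute.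
Qed.

Definition pg_point (k : nat) : PG13 := Sub _ (normalized_pg_vec k).

Definition pg_index (p : PG13) : nat := index (pg_coords p) pg_table.

Lemma pg_coords_table (p : PG13) : pg_coords p \in pg_table.
Proof.
have := valP p; rewrite normalized2 /pg_coords.
by case: (val p 0 0) (val p 0 1) => [[|[|[|//]]] ?] [[|[|[|//]]] ?]; vm_compute.
Qed.

Lemma pg_index_lt (p : PG13) : (pg_index p < 4)%N.
Proof. by rewrite -[4%N]/(size pg_table) index_mem pg_coords_table. Qed.

Lemma pg_vec_index (p : PG13) : pg_vec (pg_index p) = pg_coords p.
Proof. exact/nth_index/pg_coords_table. Qed.

Lemma pg_indexK : cancel pg_index pg_point.
Proof.
move=> p; apply/val_inj/rowP => j; rewrite mxE pg_vec_index.
by case: (ord2P j) => ->; rewrite natr_Zp.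
Qed.

Lemma pg_pointK (k : nat) : (k < 4)%N -> pg_index (pg_point k) = k.
Proof.
rewrite /pg_index /pg_coords /= !mxE.
by case: k => [|[|[|[|//]]]] _; vm_compute.
Qed.
End ProjectiveLine.

Definition grid_index (u : SP) : nat := 4 * pg_index u.1 + pg_index u.2.

Definition grid_point (n : nat) : SP := (pg_point (n %/ 4), pg_point (n %% 4)).

Lemma grid_index_lt (u : SP) : grid_index u < 16.
Proof. by rewrite /grid_index; have := pg_index_lt u.1; have := pg_index_lt u.2; lia. Qed.

Lemma grid_index_div (u : SP) : grid_index u %/ 4 = pg_index u.1.
Proof. by rewrite /grid_index mulnC divnMDl // divn_small ?addn0 ?pg_index_lt. Qed.

Lemma grid_index_mod (u : SP) : grid_index u %% 4 = pg_index u.2.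
Proof. by rewrite /grid_index mulnC modnMDl modn_small ?pg_index_lt. Qed.

Lemma grid_indexK : cancel grid_index grid_point.
Proof.
by move=> u; rewrite /grid_point grid_index_div grid_index_mod !pg_indexK; case: u.
Qed.

Lemma grid_pointK (n : nat) : n < 16 -> grid_index (grid_point n) = n.
Proof.
move=> lt_n16; rewrite /grid_index !pg_pointK ?ltn_pmod //; last by rewrite ltn_divLR.
by rewrite {3}(divn_eq n 4) mulnC.
Qed.

(** * Point sets as bit lists *)

Definition set_of_bits (s : seq bool) : {set SP} := [set u | nth false s (grid_index u)].

Definition bits_of_set (H : {set SP}) : seq bool := [seq grid_point n \in H | n <- iota 0 16].

Lemma bits_of_setK : cancel bits_of_set set_of_bits.
Proof.
move=> H; apply/setP => u; rewrite inE (nth_map 0) ?size_iota ?grid_index_lt //.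
by rewrite nth_iota ?grid_index_lt // grid_indexK.
Qed.

Lemma set_of_bitsK (s : seq bool) : size s = 16 -> bits_of_set (set_of_bits s) = s.
Proof.
move=> s16; apply: (@eq_from_nth _ false); first by rewrite size_map size_iota s16.
move=> n; rewrite size_map size_iota => lt_n16.
by rewrite (nth_map 0) ?size_iota // nth_iota // inE add0n grid_pointK.
Qed.

Lemma set_of_bits_inj (s t : seq bool) :
  size s = 16 -> size t = 16 -> set_of_bits s = set_of_bits t -> s = t.
Proof. by move=> s16 t16 est; rewrite -(set_of_bitsK s16) est set_of_bitsK. Qed.

Definition meet_bits (s t : seq bool) : seq bool := [seq x.1 && x.2 | x <- zip s t].

Lemma nth_meet_bits (s t : seq bool) (n : nat) :
  nth false (meet_bits s t) n = nth false s n && nth false t n.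
Proof.
have [lt_n_st | le_st_n] := ltnP n (size (zip s t)).
  by rewrite (nth_map (false, false)) // nth_zip_cond lt_n_st.
rewrite nth_default ?size_map //; move: le_st_n; rewrite size_zip geq_min.
by case/orP => /(nth_default false) ->; rewrite ?andbF.
Qed.

Lemma size_meet_bits (s t : seq bool) : size (meet_bits s t) = minn (size s) (size t).
Proof. by rewrite size_map size_zip. Qed.

Lemma meet_bitsC (s t : seq bool) : meet_bits s t = meet_bits t s.
Proof.
apply: (@eq_from_nth _ false) => [|n _]; first by rewrite !size_meet_bits minnC.
by rewrite !nth_meet_bits andbC.
Qed.

Lemma set_of_bitsI (s t : seq bool) :
  set_of_bits (meet_bits s t) = set_of_bits s :&: set_of_bits t.
Proof. by apply/setP => u; rewrite !inE nth_meet_bits. Qed.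

Definition grid_points (c : seq nat) : {set SP} := [set u | grid_index u \in c].

Lemma grid_pointsT : grid_points (iota 0 16) = setT.
Proof. by apply/setP => u; rewrite inE in_setT mem_iota grid_index_lt. Qed.

Lemma grid_points_subset (c : seq nat) (s : seq bool) :
  all (gtn 16) c -> (grid_points c \subset set_of_bits s) = all (nth false s) c.
Proof.
move=> /allP c16; apply/idP/allP => [/subsetP sub n nc | sc].
- have n16 : n < 16 := c16 n nc.
  by have := sub (grid_point n); rewrite !inE grid_pointK // => /(_ nc).
- by apply/subsetP => u; rewrite !inE; apply: sc.
Qed.

Lemma card_grid_points (c : seq nat) : uniq c -> all (gtn 16) c -> #|grid_points c| = size c.
Proof.
move=> c_uniq /allP c16.
have -> : grid_points c = [set u : SP in map grid_point c].
  apply/setP => u; rewrite !inE; apply/idP/mapP => [uc | [n nc ->]] /=.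
  - by exists (grid_index u); rewrite ?grid_indexK.
  - by rewrite grid_pointK //; apply: c16.
rewrite cardsE (card_uniqP _) ?size_map // map_inj_in_uniq // => m n mc nc.
by move/(congr1 grid_index); rewrite !grid_pointK //; apply: c16.
Qed.

Lemma card_grid_pointsI (c : seq nat) (s : seq bool) : uniq c -> all (gtn 16) c ->
  #|grid_points c :&: set_of_bits s| = count (nth false s) c.
Proof.
move=> c_uniq /allP c16.
have -> : grid_points c :&: set_of_bits s = grid_points [seq n <- c | nth false s n].
  by apply/setP => u; rewrite !inE mem_filter andbC.
rewrite card_grid_points ?size_filter ?filter_uniq //.
by apply/allP => n; rewrite mem_filter => /andP[_ /c16].
Qed.

Definition row_code (i : nat) : seq nat := [seq n <- iota 0 16 | n %/ 4 == i].
Definition col_code (j : nat) : seq nat := [seq n <- iota 0 16 | n %% 4 == j].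
Definition line_codes : seq (seq nat) := map row_code (iota 0 4) ++ map col_code (iota 0 4).

Lemma line_codes_grid : all (fun c => uniq c && all (gtn 16) c) line_codes.
Proof. by vm_compute. Qed.

Lemma pg_point_eq (p : PG13) (i : nat) : i < 4 -> (p == pg_point i) = (pg_index p == i).
Proof. by move=> lt_i4; apply/eqP/eqP => [-> | <-]; rewrite ?pg_pointK ?pg_indexK. Qed.

Lemma grid_row_points (i : nat) : i < 4 -> grid_row (pg_point i) = grid_points (row_code i).
Proof.
move=> lt_i4; apply/setP => u.
by rewrite !inE mem_filter mem_iota grid_index_lt grid_index_div pg_point_eq // !andbT.
Qed.

Lemma grid_col_points (j : nat) : j < 4 -> grid_col (pg_point j) = grid_points (col_code j).
Proof.
move=> lt_j4; apply/setP => u.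
by rewrite !inE mem_filter mem_iota grid_index_lt grid_index_mod pg_point_eq // !andbT.
Qed.

Lemma forall_grid_lines (P : pred {set SP}) :
  [forall l in grid_lines, P l] = all (fun c => P (grid_points c)) line_codes.
Proof.
apply/forall_inP/allP => [Pl c | Pc l].
- rewrite mem_cat => /orP[] /mapP[i]; rewrite mem_iota => /andP[_ lt_i4] ->; apply: Pl.
  + by rewrite -grid_row_points // !inE imset_f.
  + by rewrite -grid_col_points // !inE imset_f ?orbT.
- rewrite !inE => /orP[] /imsetP[p _ ->]; rewrite -(pg_indexK p).
  + rewrite grid_row_points ?pg_index_lt //; apply: Pc; rewrite mem_cat.
    by apply/orP; left; apply: map_f; rewrite mem_iota pg_index_lt.
  + rewrite grid_col_points ?pg_index_lt //; apply: Pc; rewrite mem_cat.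
    by apply/orP; right; apply: map_f; rewrite mem_iota pg_index_lt.
Qed.

Definition hyperplane_bits (s : seq bool) : bool :=
  ~~ all (nth false s) (iota 0 16) &&
  all (fun c => all (nth false s) c || (count (nth false s) c == 1)) line_codes.

Definition ovoid_bits (s : seq bool) : bool :=
  hyperplane_bits s && all (fun c => ~~ all (nth false s) c) line_codes.

Definition disjoint_bits (s t : seq bool) : bool :=
  count (nth false (meet_bits s t)) (iota 0 16) == 0.

Lemma set_of_bits_neqT (s : seq bool) :
  (set_of_bits s != setT) = ~~ all (nth false s) (iota 0 16).
Proof.
by rewrite eqEsubset subsetT /= -grid_pointsT grid_points_subset.
Qed.

Lemma geom_hyperplane_bitsE (s : seq bool) : geom_hyperplane (set_of_bits s) = hyperplane_bits s.
Proof.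
rewrite /geom_hyperplane set_of_bits_neqT forall_grid_lines; congr andb.
apply: eq_in_all => c /(allP line_codes_grid) /andP[c_uniq c16] /=.
by rewrite grid_points_subset // card_grid_pointsI.
Qed.

Lemma ovoid_bitsE (s : seq bool) : ovoid (set_of_bits s) = ovoid_bits s.
Proof.
rewrite /ovoid geom_hyperplane_bitsE forall_grid_lines; congr andb.
apply: eq_in_all => c /(allP line_codes_grid) /andP[_ c16] /=.
by rewrite grid_points_subset.
Qed.

Lemma disjoint_bitsE (s t : seq bool) :
  [disjoint set_of_bits s & set_of_bits t] = disjoint_bits s t.
Proof.
rewrite -setI_eq0 -set_of_bitsI -cards_eq0 -[set_of_bits _]setTI -grid_pointsT.
by rewrite card_grid_pointsI ?iota_uniq //; apply/allP => n; rewrite mem_iota.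
Qed.

Definition sets_of_bits (x : seq (seq bool)) : {set {set SP}} := [set h in map set_of_bits x].

Lemma forall_sets_of_bits (x : seq (seq bool)) (P : pred {set SP}) :
  [forall h in sets_of_bits x, P h] = all (fun s => P (set_of_bits s)) x.
Proof.
apply/forall_inP/allP => [Ph s sx | Ps h]; first by apply: Ph; rewrite inE map_f.
by rewrite inE => /mapP[s sx ->]; apply: Ps.
Qed.

Lemma set_of_bits_eq (s t : seq bool) :
  size s = 16 -> size t = 16 -> (set_of_bits s == set_of_bits t) = (s == t).
Proof. by move=> s16 t16; apply/eqP/eqP => [/set_of_bits_inj -> | ->]. Qed.

Lemma mem_sets_of_bits (x : seq (seq bool)) (s : seq bool) :
  all (fun t => size t == 16) x -> size s = 16 ->
  (set_of_bits s \in sets_of_bits x) = (s \in x).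
Proof.
move=> /allP x16 s16; rewrite inE; apply/mapP/idP => [[t tx /set_of_bits_inj] | sx].
  by move=> -> //; apply/eqP/x16.
by exists s.
Qed.

Lemma card_sets_of_bits (x : seq (seq bool)) :
  uniq x -> all (fun s => size s == 16) x -> #|sets_of_bits x| = size x.
Proof.
move=> x_uniq /allP x16; rewrite cardsE (card_uniqP _) ?size_map // map_inj_in_uniq //.
by move=> s t /x16/eqP s16 /x16/eqP t16; apply: set_of_bits_inj.
Qed.

(* Equivalent to the definition by distinct_pairs_constant, with 6 comparisons
   instead of 256. *)
Definition veldkamp_bits (x : seq (seq bool)) : bool :=
  if x is [:: s1, s2 & _] then
    (size x == 4) && pairwise (fun s t => (s == t) || (meet_bits s t == meet_bits s1 s2)) x
  else false.

Lemma veldkamp_line_bits (x : seq (seq bool)) :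
  uniq x -> all (fun s => (size s == 16) && hyperplane_bits s) x ->
  veldkamp_line (sets_of_bits x) = veldkamp_bits x.
Proof.
move=> x_uniq /allP xH.
have x16 : all (fun s => size s == 16) x by apply/allP => s /xH /andP[].
rewrite /veldkamp_line card_sets_of_bits // forall_sets_of_bits.
have -> : all (fun s => geom_hyperplane (set_of_bits s)) x.
  by apply/allP => s /xH /andP[_]; rewrite geom_hyperplane_bitsE.
case: x => [|s1 [|s2 y]] in x_uniq xH x16 * => //.
rewrite andbT /veldkamp_bits.
have s12 : s1 != s2 by move: x_uniq => /andP[]; rewrite inE negb_or => /andP[].
congr andb; rewrite -distinct_pairs_constant //; last exact: meet_bitsC.
have sz s : s \in [:: s1, s2 & y] -> size s = 16 by move/xH/andP => [/eqP].
rewrite forall_sets_of_bits; apply: eq_in_all => a /sz a16.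
rewrite forall_sets_of_bits; apply: eq_in_all => b /sz b16.
rewrite forall_sets_of_bits; apply: eq_in_all => c /sz c16.
rewrite forall_sets_of_bits; apply: eq_in_all => d /sz d16.
by rewrite !set_of_bits_eq // -!set_of_bitsI set_of_bits_eq // size_meet_bits ?a16 ?b16 ?c16 ?d16.
Qed.

(** * The 40 hyperplanes and the 136 Veldkamp lines *)

Definition hyperplane_table : seq (seq bool) :=
  Eval vm_compute in [seq s <- words [:: true; false] 16 | hyperplane_bits s].

Lemma hyperplane_tableE :
  hyperplane_table = [seq s <- words [:: true; false] 16 | hyperplane_bits s].
Proof. by vm_compute. Qed.

Lemma hyperplane_table_uniq : uniq hyperplane_table.
Proof. by vm_compute. Qed.

Lemma size_hyperplane_table : size hyperplane_table = 40.
Proof. by vm_compute. Qed.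

Lemma mem_hyperplane_table (s : seq bool) :
  (s \in hyperplane_table) = (size s == 16) && hyperplane_bits s.
Proof.
rewrite hyperplane_tableE mem_filter mem_words andbC.
by congr (_ && _); rewrite [all _ s](introT allP) ?andbT // => -[].
Qed.

Lemma card_geom_hyperplanes : #|[set H : {set SP} | geom_hyperplane H]| = 40.
Proof.
rewrite -size_hyperplane_table; apply: card_eq_size hyperplane_table_uniq _ _.
- exact: in2W (can_inj bits_of_setK).
- move=> H; rewrite inE -{1}(bits_of_setK H) geom_hyperplane_bitsE mem_hyperplane_table.
  by rewrite size_map size_iota.
- move=> s; rewrite mem_hyperplane_table => /andP[/eqP s16 sH].
  by exists (set_of_bits s); rewrite ?inE ?geom_hyperplane_bitsE ?set_of_bitsK.
Qed.

Definition table_bits (x : seq nat) : seq (seq bool) := [seq nth [::] hyperplane_table k | k <- x].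

Definition hyperplane (k : nat) : {set SP} := set_of_bits (nth [::] hyperplane_table k).

Definition hyperplanes_of (x : seq nat) : {set {set SP}} := sets_of_bits (table_bits x).

Definition hyperplane_indices (V : {set {set SP}}) : seq nat :=
  [seq k <- iota 0 40 | hyperplane k \in V].

Lemma hyperplanes_ofP (x : seq nat) (h : {set SP}) :
  reflect (exists2 k, k \in x & h = hyperplane k) (h \in hyperplanes_of x).
Proof.
rewrite inE; apply: (iffP mapP) => [[s /mapP[k kx ->] ->] | [k kx ->]]; first by exists k.
by exists (nth [::] hyperplane_table k); rewrite ?map_f.
Qed.

Lemma hyperplane_table_entry (k : nat) : k < 40 ->
  size (nth [::] hyperplane_table k) = 16 /\ hyperplane_bits (nth [::] hyperplane_table k).
Proof.
rewrite -size_hyperplane_table => /(mem_nth [::]).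
by rewrite mem_hyperplane_table => /andP[/eqP].
Qed.

Lemma table_bits_uniq (x : seq nat) : uniq x -> all (gtn 40) x -> uniq (table_bits x).
Proof.
move=> x_uniq /allP x40; rewrite map_inj_in_uniq // => k l /x40 k40 /x40 l40 /eqP.
by rewrite nth_uniq ?size_hyperplane_table ?hyperplane_table_uniq // => /eqP.
Qed.

Lemma mem_table_bits (x : seq nat) (k : nat) : all (gtn 40) x -> k < 40 ->
  (nth [::] hyperplane_table k \in table_bits x) = (k \in x).
Proof.
move=> /allP x40 k40; apply/mapP/idP => [[l lx] | kx]; last by exists k.
have l40 : l < 40 := x40 l lx.
by move/eqP; rewrite nth_uniq ?size_hyperplane_table ?hyperplane_table_uniq // => /eqP ->.
Qed.

Lemma hyperplane_indicesK (V : {set {set SP}}) :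
  {in V, forall h, geom_hyperplane h} -> hyperplanes_of (hyperplane_indices V) = V.
Proof.
move=> VH; apply/setP => h; apply/hyperplanes_ofP/idP => [[k] | hV].
  by rewrite mem_filter => /andP[kV _] ->.
have /(nthP [::]) [k k40 kh] : bits_of_set h \in hyperplane_table.
  by rewrite mem_hyperplane_table size_map size_iota -geom_hyperplane_bitsE bits_of_setK VH.
exists k; last by rewrite /hyperplane kh bits_of_setK.
by rewrite mem_filter /hyperplane kh bits_of_setK hV mem_iota -size_hyperplane_table.
Qed.

Lemma hyperplanes_ofK (x : seq nat) :
  subseq x (iota 0 40) -> hyperplane_indices (hyperplanes_of x) = x.
Proof.
move=> x_sub; have x40 : all (gtn 40) x.
  by apply/allP => k /(mem_subseq x_sub); rewrite mem_iota.
rewrite [RHS](subseq_uniqP (iota_uniq 0 40) x_sub); apply: eq_in_filter => k.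
rewrite mem_iota => /andP[_ k40]; have [k16 _] := hyperplane_table_entry k40.
rewrite /hyperplane mem_sets_of_bits ?mem_table_bits //.
by apply/allP => s /mapP[l /(allP x40) l40 ->]; have [-> _] := hyperplane_table_entry l40.
Qed.

Lemma hyperplane_indices_inj (V W : {set {set SP}}) :
  {in V, forall h, geom_hyperplane h} -> {in W, forall h, geom_hyperplane h} ->
  hyperplane_indices V = hyperplane_indices W -> V = W.
Proof. by move=> VH WH eVW; rewrite -(hyperplane_indicesK VH) eVW hyperplane_indicesK. Qed.

Lemma hyperplane_geom (k : nat) : k < 40 -> geom_hyperplane (hyperplane k).
Proof.
by move=> k40; have [_] := hyperplane_table_entry k40; rewrite -geom_hyperplane_bitsE.
Qed.

Lemma hyperplanes_of_geom (x : seq nat) :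
  all (gtn 40) x -> {in hyperplanes_of x, forall h, geom_hyperplane h}.
Proof. by move=> /allP x40 h /hyperplanes_ofP[k /x40 k40 ->]; apply: hyperplane_geom. Qed.

Lemma veldkamp_line_hyperplanes (V : {set {set SP}}) :
  veldkamp_line V -> {in V, forall h, geom_hyperplane h}.
Proof. by case/andP => /andP[_ /forall_inP]. Qed.

Lemma veldkamp_line_hyperplanes_of (x : seq nat) :
  subseq x (iota 0 40) -> veldkamp_line (hyperplanes_of x) = veldkamp_bits (table_bits x).
Proof.
move=> x_sub; have x40 : all (gtn 40) x.
  by apply/allP => k /(mem_subseq x_sub); rewrite mem_iota.
apply: veldkamp_line_bits; first exact: table_bits_uniq (subseq_uniq x_sub (iota_uniq 0 40)) x40.
by apply/allP => s /mapP[k /(allP x40) k40 ->]; have [-> ->] := hyperplane_table_entry k40.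
Qed.

Lemma veldkamp_bits_size (x : seq (seq bool)) : veldkamp_bits x -> size x = 4.
Proof. by case: x => [|s1 [|s2 y]] // /andP[/eqP]. Qed.

Definition veldkamp_codes : seq (seq nat) :=
  Eval vm_compute in [seq x <- ksubseqs 4 (iota 0 40) | veldkamp_bits (table_bits x)].

Lemma veldkamp_codesE :
  veldkamp_codes = [seq x <- ksubseqs 4 (iota 0 40) | veldkamp_bits (table_bits x)].
Proof. by vm_compute. Qed.

Lemma veldkamp_codes_uniq : uniq veldkamp_codes.
Proof. by vm_compute. Qed.

Lemma size_veldkamp_codes : size veldkamp_codes = 136.
Proof. by vm_compute. Qed.

Lemma mem_veldkamp_codes (x : seq nat) :
  (x \in veldkamp_codes) = subseq x (iota 0 40) && veldkamp_line (hyperplanes_of x).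
Proof.
rewrite veldkamp_codesE mem_filter mem_ksubseqs.
have [x_sub | _] := boolP (subseq x (iota 0 40)); last by rewrite andbF.
rewrite veldkamp_line_hyperplanes_of //= andb_idr // => /veldkamp_bits_size.
by rewrite size_map => ->.
Qed.

Lemma veldkamp_line_code (V : {set {set SP}}) :
  veldkamp_line V -> hyperplane_indices V \in veldkamp_codes.
Proof.
move=> VV; rewrite mem_veldkamp_codes hyperplane_indicesK ?VV ?filter_subseq //.
exact: veldkamp_line_hyperplanes.
Qed.

Lemma card_veldkamp_lines : #|[set V : {set {set SP}} | veldkamp_line V]| = 136.
Proof.
rewrite -size_veldkamp_codes; apply: card_eq_size veldkamp_codes_uniq _ _.
- move=> V W; rewrite !inE => /veldkamp_line_hyperplanes VH /veldkamp_line_hyperplanes WH.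
  exact: hyperplane_indices_inj.
- by move=> V; rewrite inE; apply: veldkamp_line_code.
- move=> x; rewrite mem_veldkamp_codes => /andP[x_sub xV].
  by exists (hyperplanes_of x); rewrite ?inE ?hyperplanes_ofK.
Qed.

(** * Planes and lines of PG(3,3) in coordinates *)

Lemma row_free_injP (K : fieldType) (m n : nat) (A : 'M[K]_(m, n)) :
  reflect (forall v : 'rV_m, (v *m A = 0 -> v = 0)%R) (row_free A).
Proof.
apply: (iffP idP) => [freeA v /eqP | inj]; first by rewrite (mulmx_free_eq0 _ freeA) => /eqP.
rewrite -kermx_eq0; apply/eqP/row_matrixP => i; rewrite row0.
by apply: inj; rewrite -row_mul mulmx_ker row0.
Qed.

(* A vector over GF(3) is coded by the list of its coordinates, as naturals in
   digits; dot3 u v tests whether u . v = 0 in GF(3). *)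
Definition digits : seq nat := [:: 0; 1; 2].

Definition dot3 (u v : seq nat) : bool := 3 %| sumn [seq x.1 * x.2 | x <- zip u v].

Definition segre_code (i j : nat) : seq nat := [seq x * y | x <- pg_vec i, y <- pg_vec j].

Definition section_bits (q : seq nat) : seq bool :=
  [seq dot3 (segre_code (n %/ 4) (n %% 4)) q | n <- iota 0 16].

Definition columns (rs : seq (seq nat)) : seq (seq nat) :=
  [seq [seq nth 0 r k | r <- rs] | k <- iota 0 4].

Definition rank2_code (rs : seq (seq nat)) : bool :=
  all (fun c => (c == [:: 0; 0]) || ~~ all (dot3 c) (columns rs)) (words digits 2).

Section PlaneCoordinates.
Local Open Scope ring_scope.
Local Notation mi := (@mxvec_index 2 2).

(* Coordinates in the order of mxvec_index, i.e. of the products in segre_code. *)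
Definition plane_code (a : 'rV[F3]_(2 * 2)) : seq nat :=
  [seq nat_of_ord (a 0 k) | k <- [:: mi 0 0; mi 0 1; mi 1 0; mi 1 1]].

Definition mx_code (M : 'M[F3]_(2, 2 * 2)) : seq (seq nat) :=
  [seq plane_code (row i M) | i <- [:: 0; 1]].

Definition vec_code (v : 'rV[F3]_2) : seq nat := [:: nat_of_ord (v 0 0); nat_of_ord (v 0 1)].

Definition plane_of_code (q : seq nat) : 'rV[F3]_(2 * 2) :=
  mxvec (\matrix_(p < 2, r < 2) (nth 0%N q (2 * p + r))%:R).

Definition mx_of_code (rs : seq (seq nat)) : 'M[F3]_(2, 2 * 2) :=
  \matrix_(i < 2) plane_of_code (nth [::] rs i).

Definition vec_of_code (c : seq nat) : 'rV[F3]_2 := \row_(j < 2) (nth 0%N c j)%:R.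

Lemma dot3E (u v : seq nat) : dot3 u v = ((sumn [seq x.1 * x.2 | x <- zip u v])%:R == 0 :> F3).
Proof. by rewrite /dot3 (dvdn_pcharf (pchar_Fp _)). Qed.

Lemma sum_mxvec2 (f : 'I_(2 * 2) -> F3) :
  \sum_k f k = f (mi 0 0) + f (mi 0 1) + f (mi 1 0) + f (mi 1 1).
Proof.
rewrite (reindex _ (curry_mxvec_bij 2 2)) /= (_ : \sum_j _ = \sum_i \sum_j f (mi i j)); last first.
  by rewrite pair_bigA; apply: eq_bigr => -[].
by rewrite !big_ord_recl !big_ord0 !addr0 addrA (_ : lift ord0 ord0 = 1) //; apply/val_inj.
Qed.

Lemma mx11_eq0 (A : 'M[F3]_1) : (A == 0) = (A 0 0 == 0).
Proof.
by apply/eqP/eqP => [-> | A00]; [rewrite mxE | apply/matrixP => i j; rewrite !ord1 mxE].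
Qed.

Lemma dot_plane_code (a b : 'rV[F3]_(2 * 2)) :
  (a *m b^T == 0) = dot3 (plane_code a) (plane_code b).
Proof.
rewrite mx11_eq0 dot3E /= !natrD !natrM !natr_Zp addr0 !addrA mxE sum_mxvec2.
by rewrite !mxE.
Qed.

Lemma sectionE (a : 'rV[F3]_(2 * 2)) :
  section a = set_of_bits (section_bits (plane_code a)).
Proof.
apply/setP => u; rewrite !inE (nth_map 0%N) ?size_iota ?grid_index_lt //.
rewrite nth_iota ?grid_index_lt // add0n grid_index_div grid_index_mod.
rewrite /segre_code !pg_vec_index /pg_coords mx11_eq0 dot3E /=.
rewrite !natrD !natrM !natr_Zp addr0 !addrA mxE sum_mxvec2 !mxE !mxvecE.
by rewrite !mxE !big_ord1 !mxE.
Qed.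

Lemma ord2_sum (f : 'I_2 -> F3) : \sum_j f j = f 0 + f 1.
Proof.
by rewrite !big_ord_recl big_ord0 addr0 (_ : lift ord0 ord0 = 1) //; apply/val_inj.
Qed.

Lemma rv4_eq0 (b : 'rV[F3]_(2 * 2)) :
  (b == 0) = [&& b 0 (mi 0 0) == 0, b 0 (mi 0 1) == 0, b 0 (mi 1 0) == 0 & b 0 (mi 1 1) == 0].
Proof.
apply/eqP/and4P => [-> | [/eqP b00 /eqP b01 /eqP b10 /eqP b11]]; first by rewrite !mxE eqxx.
apply/rowP => k; rewrite mxE; case/mxvec_indexP: k => p r.
by case: (ord2P p) => ->; case: (ord2P r) => ->.
Qed.

Lemma plane_code_eq0 (a : 'rV[F3]_(2 * 2)) : (a == 0) = (plane_code a == [:: 0; 0; 0; 0]%N).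
Proof. by rewrite rv4_eq0 /plane_code /= !eqseq_cons andbT. Qed.

Lemma mulmx_tr_eq0_code (M : 'M[F3]_(2, 2 * 2)) (a : 'rV[F3]_(2 * 2)) :
  (M *m a^T == 0) = all (dot3^~ (plane_code a)) (mx_code M).
Proof.
rewrite /= andbT -!dot_plane_code -!row_mul.
apply/eqP/andP => [-> | [/eqP r0 /eqP r1]]; first by rewrite !row0.
by apply/row_matrixP => i; rewrite row0; case: (ord2P i) => ->.
Qed.

Lemma vec_code_eq0 (v : 'rV[F3]_2) : (v == 0) = (vec_code v == [:: 0; 0]%N).
Proof.
apply/eqP/eqP => [-> | [v0 v1]]; first by rewrite /vec_code !mxE.
by apply/rowP => j; rewrite mxE; case: (ord2P j) => ->; apply/val_inj.
Qed.

Lemma vec_mul_eq0_code (v : 'rV[F3]_2) (M : 'M[F3]_(2, 2 * 2)) :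
  (v *m M == 0) = all (dot3 (vec_code v)) (columns (mx_code M)).
Proof.
by rewrite rv4_eq0 /= andbT !dot3E /= !natrD !natrM !natr_Zp !addr0 !mxE !ord2_sum.
Qed.

Lemma mem_digits (n : nat) : (n \in digits) = (n < 3)%N.
Proof. by case: n => [|[|[|n]]]. Qed.

Lemma F3_code_digit (x : F3) : nat_of_ord x \in digits.
Proof. by rewrite mem_digits; apply: ltn_ord. Qed.

Lemma F3_natr_val (n : nat) : n \in digits -> nat_of_ord (n%:R : F3) = n.
Proof. by rewrite mem_digits => lt_n3; rewrite val_Fp_nat // modn_small. Qed.

Lemma vec_code_words (v : 'rV[F3]_2) : vec_code v \in words digits 2.
Proof. by rewrite mem_words /= !F3_code_digit. Qed.

Lemma vec_of_codeK (c : seq nat) : c \in words digits 2 -> vec_code (vec_of_code c) = c.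
Proof.
rewrite mem_words; case: c => [|c0 [|c1 []]] //= /and3P[d0 d1 _].
by rewrite /vec_code !mxE /= !F3_natr_val.
Qed.

Lemma plane_code_words (a : 'rV[F3]_(2 * 2)) : plane_code a \in words digits 4.
Proof. by rewrite mem_words /= !F3_code_digit. Qed.

Lemma plane_of_codeK (q : seq nat) : q \in words digits 4 -> plane_code (plane_of_code q) = q.
Proof.
rewrite mem_words; case: q => [|q0 [|q1 [|q2 [|q3 []]]]] //= /and5P[d0 d1 d2 d3 _].
by rewrite /plane_code /= !mxvecE !mxE /= !F3_natr_val.
Qed.

Lemma mx_code_words (M : 'M[F3]_(2, 2 * 2)) : mx_code M \in words (words digits 4) 2.
Proof. by rewrite mem_words /= !plane_code_words. Qed.

Lemma mx_of_codeK (rs : seq (seq nat)) :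
  rs \in words (words digits 4) 2 -> mx_code (mx_of_code rs) = rs.
Proof.
rewrite mem_words; case: rs => [|r0 [|r1 []]] // /andP[_ /and3P[d0 d1 _]].
by rewrite /mx_code /= !rowK !plane_of_codeK.
Qed.

Lemma rank2_mx_code (M : 'M[F3]_(2, 2 * 2)) : (\rank M == 2%N) = rank2_code (mx_code M).
Proof.
apply/(row_free_injP M)/allP => [inj c c_words | code_ok v vM0].
- rewrite -(vec_of_codeK c_words) -vec_code_eq0 -vec_mul_eq0_code.
  by have [/inj -> | vM_neq0] := eqVneq (vec_of_code c *m M) 0; rewrite ?eqxx ?vM_neq0 ?orbT.
- apply/eqP; rewrite vec_code_eq0.
  have /orP[// | ] := code_ok _ (vec_code_words v).
  by rewrite -vec_mul_eq0_code vM0 eqxx.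
Qed.
End PlaneCoordinates.

(** * Pencils of planes *)

Definition section_table : seq (seq nat * nat) :=
  Eval vm_compute in [seq (q, index (section_bits q) hyperplane_table) | q <- words digits 4].

Lemma section_tableE :
  section_table = [seq (q, index (section_bits q) hyperplane_table) | q <- words digits 4].
Proof. by vm_compute. Qed.

Lemma sections_in_table :
  all (fun q => (q == [:: 0; 0; 0; 0]) || (section_bits q \in hyperplane_table)) (words digits 4).
Proof. by vm_compute. Qed.

(* The let makes ks be computed once per matrix instead of once per index k. *)
Definition pencil_code (rs : seq (seq nat)) : seq nat :=
  let ks := [seq p.2 | p <- section_table & (p.1 != [:: 0; 0; 0; 0]) && all (dot3^~ p.1) rs] in
  [seq k <- iota 0 40 | k \in ks].

Definition pencil_list : seq (seq nat) :=
  [seq pencil_code rs | rs <- words (words digits 4) 2 & rank2_code rs].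

Definition pencil_codes : seq (seq nat) :=
  Eval vm_compute in [seq x <- veldkamp_codes | x \in pencil_list].

Lemma pencil_codesE : pencil_codes = [seq x <- veldkamp_codes | x \in pencil_list].
Proof. by vm_compute. Qed.

Lemma pencils_veldkamp :
  all (fun rs => rank2_code rs ==> (pencil_code rs \in veldkamp_codes)) (words (words digits 4) 2).
Proof. by vm_compute. Qed.

Lemma pencil_codes_uniq : uniq pencil_codes.
Proof. by vm_compute. Qed.

Lemma size_pencil_codes : size pencil_codes = 130.
Proof. by vm_compute. Qed.

Lemma veldkamp_codes_nonpencil_ovoids :
  all (fun x => (x \in pencil_codes) || all ovoid_bits (table_bits x) &&
         all2rel (fun s t => (s == t) || disjoint_bits s t) (table_bits x)) veldkamp_codes.
Proof. by vm_compute. Qed.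

Lemma pencil_code_subseq (rs : seq (seq nat)) : subseq (pencil_code rs) (iota 0 40).
Proof. exact: filter_subseq. Qed.

Lemma pencil_code_lt (rs : seq (seq nat)) : all (gtn 40) (pencil_code rs).
Proof. by apply/allP => k /(mem_subseq (pencil_code_subseq rs)); rewrite mem_iota. Qed.

Lemma section_in_table (q : seq nat) : q \in words digits 4 -> q != [:: 0; 0; 0; 0] ->
  section_bits q \in hyperplane_table.
Proof.
move=> q_words /negPf q_neq0.
by have /allP/(_ q q_words) := sections_in_table; rewrite q_neq0.
Qed.

Lemma mem_pencil_code (rs : seq (seq nat)) (k : nat) :
  reflect (exists2 q, q \in words digits 4 & [/\ q != [:: 0; 0; 0; 0], all (dot3^~ q) rs
                                             & k = index (section_bits q) hyperplane_table])
          (k \in pencil_code rs).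
Proof.
rewrite /pencil_code mem_filter section_tableE; apply: (iffP andP).
  case=> /mapP[p]; rewrite mem_filter => /andP[/andP[p_neq0 p_rs] /mapP[q q_words pq]] -> _.
  by exists q; rewrite pq in p_neq0 p_rs *.
case=> q q_words [q_neq0 q_rs ->]; split.
  apply/mapP; exists (q, index (section_bits q) hyperplane_table) => //.
  by rewrite mem_filter q_neq0 q_rs map_f.
by rewrite mem_iota -size_hyperplane_table index_mem section_in_table.
Qed.

Lemma pencil_sectionsE (M : 'M[F3]_(2, 2 * 2)) :
  pencil_sections M = hyperplanes_of (pencil_code (mx_code M)).
Proof.
have table_section q : q \in words digits 4 -> q != [:: 0; 0; 0; 0] ->
    hyperplane (index (section_bits q) hyperplane_table) = set_of_bits (section_bits q).
  by move=> q_words q_neq0; rewrite /hyperplane nth_index ?section_in_table.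
apply/setP => h; apply/imsetP/hyperplanes_ofP => [[a] | [k /mem_pencil_code[q q_words]]].
- rewrite inE plane_code_eq0 mulmx_tr_eq0_code => /andP[a_neq0 a_ker] ->.
  exists (index (section_bits (plane_code a)) hyperplane_table).
    by apply/mem_pencil_code; exists (plane_code a); rewrite ?plane_code_words.
  by rewrite table_section ?plane_code_words // sectionE.
- case=> q_neq0 q_rs -> ->; exists (plane_of_code q).
    by rewrite inE plane_code_eq0 mulmx_tr_eq0_code plane_of_codeK // q_neq0.
  by rewrite table_section // sectionE plane_of_codeK.
Qed.

Lemma pencil_sections_hyperplanes (M : 'M[F3]_(2, 2 * 2)) :
  {in pencil_sections M, forall h, geom_hyperplane h}.
Proof. by rewrite pencil_sectionsE; apply/hyperplanes_of_geom/pencil_code_lt. Qed.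

Lemma hyperplane_indices_pencil (M : 'M[F3]_(2, 2 * 2)) :
  hyperplane_indices (pencil_sections M) = pencil_code (mx_code M).
Proof. by rewrite pencil_sectionsE hyperplanes_ofK ?pencil_code_subseq. Qed.

Lemma mem_pencil_list (x : seq nat) :
  x \in pencil_list -> exists2 M : 'M[F3]_(2, 2 * 2), \rank M = 2 & x = pencil_code (mx_code M).
Proof.
case/mapP => rs; rewrite mem_filter => /andP[rs_rank rs_words] ->.
exists (mx_of_code rs); last by rewrite mx_of_codeK.
by apply/eqP; rewrite rank2_mx_code mx_of_codeK.
Qed.

Lemma pencil_sections_veldkamp (M : 'M[F3]_(2, 2 * 2)) :
  \rank M = 2 -> veldkamp_line (pencil_sections M).
Proof.
move=> rkM; rewrite pencil_sectionsE.
have /allP/(_ _ (mx_code_words M)) := pencils_veldkamp.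
by rewrite -rank2_mx_code rkM eqxx implyTb mem_veldkamp_codes => /andP[].
Qed.

Lemma projectiveE (V : {set {set SP}}) :
  veldkamp_line V -> projective V = (hyperplane_indices V \in pencil_codes).
Proof.
move=> VV; rewrite pencil_codesE mem_filter veldkamp_line_code // andbT.
apply/existsP/idP => [[M /andP[/eqP rkM /eqP ->]] | /mem_pencil_list[M rkM eV]].
  rewrite hyperplane_indices_pencil; apply/mapP; exists (mx_code M) => //.
  by rewrite mem_filter -rank2_mx_code rkM eqxx mx_code_words.
exists M; rewrite rkM eqxx; apply/eqP/hyperplane_indices_inj.
- exact: veldkamp_line_hyperplanes.
- exact: pencil_sections_hyperplanes.
by rewrite hyperplane_indices_pencil.
Qed.

Lemma card_projective_veldkamp_lines :
  #|[set V : {set {set SP}} | veldkamp_line V && projective V]| = 130.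
Proof.
rewrite -size_pencil_codes; apply: card_eq_size pencil_codes_uniq _ _.
- move=> V W; rewrite !inE => /andP[/veldkamp_line_hyperplanes VH _].
  by case/andP => /veldkamp_line_hyperplanes WH _; apply: hyperplane_indices_inj.
- by move=> V; rewrite inE => /andP[VV]; rewrite projectiveE.
- move=> x x_pencil; have := x_pencil; rewrite pencil_codesE mem_filter => /andP[_].
  rewrite mem_veldkamp_codes => /andP[x_sub xV].
  by exists (hyperplanes_of x); rewrite ?inE ?xV ?projectiveE ?hyperplanes_ofK.
Qed.

Lemma ovoids_of_nonpencil_code (x : seq nat) : x \in veldkamp_codes -> x \notin pencil_codes ->
  (forall h, h \in hyperplanes_of x -> ovoid h) /\
  (forall h1 h2, h1 \in hyperplanes_of x -> h2 \in hyperplanes_of x -> h1 != h2 ->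
     [disjoint h1 & h2]).
Proof.
move=> x_vk /negPf x_np; have /allP/(_ x x_vk) := veldkamp_codes_nonpencil_ovoids.
rewrite x_np orFb => /andP[/allP ovx /allrelP djx]; split.
  by move=> h; rewrite inE => /mapP[s sx ->]; rewrite ovoid_bitsE ovx.
move=> h1 h2; rewrite !inE => /mapP[s sx ->] /mapP[t tx ->] st.
by rewrite disjoint_bitsE; have /orP[/eqP eqst | //] := djx s t sx tx; rewrite eqst eqxx in st.
Qed.

Theorem mainTheorem2 :
  #|[set H : {set SP} | geom_hyperplane H]| = 40%N /\
  #|[set V : {set {set SP}} | veldkamp_line V]| = 136%N /\
  #|[set V : {set {set SP}} | veldkamp_line V && projective V]| = 130%N /\
  (forall M : 'M['F_3]_(2, 2 * 2), \rank M = 2%N -> veldkamp_line (pencil_sections M)) /\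
  (forall V : {set {set SP}}, veldkamp_line V -> ~~ projective V ->
     (forall h, h \in V -> ovoid h) /\
     (forall h1 h2, h1 \in V -> h2 \in V -> h1 != h2 -> [disjoint h1 & h2])).
Proof.
split; first exact: card_geom_hyperplanes.
split; first exact: card_veldkamp_lines.
split; first exact: card_projective_veldkamp_lines.
split; first exact: pencil_sections_veldkamp.
move=> V VV; rewrite projectiveE // => V_np.
rewrite -(hyperplane_indicesK (veldkamp_line_hyperplanes VV)).
exact: ovoids_of_nonpencil_code (veldkamp_line_code VV) V_np.
Qed.
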